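(* Let $G$ be a group acting faithfully by homeomorphisms on an infinite Hausdorff space $\mathcal{X}$. Suppose that $U$ is an open subset of $\mathcal{X}$ such that its $R_U$-orbit is equal to its $G$-orbit and is a basis of the topology of $\mathcal{X}$. Then $R_U$ is simple and is contained in every non-trivial normal subgroup of $G$.
   Context: For an open $U\subset\mathcal{X}$, $G_{(U)}$ denotes the subgroup of elements of $G$ acting trivially on $\mathcal{X}\setminus U$, and $R_U$ denotes the normal closure in $G$ of the derived subgroup $G_{(U)}'=[G_{(U)},G_{(U)}]$. The $H$-orbit of $U$ for a subgroup $H$ is $\{hU: h\in H\}$. *)

From Stdlib Require Import List.

Set Implicit Arguments.

Definition subset {T : Type} (A B : T -> Prop) : Prop := forall x, A x -> B x.
Definition set_eq {T : Type} (A B : T -> Prop) : Prop := forall x, A x <-> B x.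

Record Topology (X : Type) := {
  is_open : (X -> Prop) -> Prop;
  open_full : is_open (fun _ => True);
  open_empty : is_open (fun _ => False);
  open_inter : forall A B, is_open A -> is_open B -> is_open (fun x => A x /\ B x);
  open_union : forall (F : (X -> Prop) -> Prop),
      (forall A, F A -> is_open A) -> is_open (fun x => exists A, F A /\ A x);
  open_ext : forall A B, set_eq A B -> is_open A -> is_open B
}.

Definition hausdorff {X : Type} (T : Topology X) : Prop :=
  forall x y : X, x <> y ->
    exists U V, is_open T U /\ is_open T V /\ U x /\ V y /\
                (forall z, U z -> V z -> False).

Definition infinite_type (X : Type) : Prop :=
  forall l : list X, exists x, ~ In x l.

Definition continuous {X : Type} (T : Topology X) (f : X -> X) : Prop :=
  forall U, is_open T U -> is_open T (fun x => U (f x)).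

Definition homeomorphism {X : Type} (T : Topology X) (f : X -> X) : Prop :=
  continuous T f /\
  exists g : X -> X, continuous T g /\ (forall x, g (f x) = x) /\ (forall x, f (g x) = x).

Definition is_basis {X : Type} (T : Topology X) (B : (X -> Prop) -> Prop) : Prop :=
  (forall V, B V -> is_open T V) /\
  (forall W, is_open T W -> forall x, W x -> exists V, B V /\ V x /\ subset V W).

Record Group := {
  gcar :> Type;
  gmul : gcar -> gcar -> gcar;
  ginv : gcar -> gcar;
  gone : gcar;
  gmulA : forall a b c, gmul a (gmul b c) = gmul (gmul a b) c;
  gmul1l : forall a, gmul gone a = a;
  gmul1r : forall a, gmul a gone = a;
  gmulVl : forall a, gmul (ginv a) a = gone;
  gmulVr : forall a, gmul a (ginv a) = gone
}.

Section GroupDefs.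
Variable G : Group.

Definition comm (a b : G) : G :=
  gmul G (gmul G (ginv G a) (ginv G b)) (gmul G a b).

Definition conj (h g : G) : G := gmul G (gmul G h g) (ginv G h).

Definition is_subgroup (H : G -> Prop) : Prop :=
  H (gone G) /\ (forall a b, H a -> H b -> H (gmul G a b)) /\ (forall a, H a -> H (ginv G a)).

Inductive gen (S : G -> Prop) : G -> Prop :=
| gen_base : forall g, S g -> gen S g
| gen_one : gen S (gone G)
| gen_mul : forall a b, gen S a -> gen S b -> gen S (gmul G a b)
| gen_inv : forall a, gen S a -> gen S (ginv G a).

Definition derived (H : G -> Prop) : G -> Prop :=
  gen (fun g => exists a b, H a /\ H b /\ g = comm a b).

Definition normal_closure (S : G -> Prop) : G -> Prop :=
  gen (fun g => exists h s, S s /\ g = conj h s).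

Definition normal_in (N K : G -> Prop) : Prop :=
  is_subgroup N /\ subset N K /\ (forall k n, K k -> N n -> N (conj k n)).

Definition trivial_sub (N : G -> Prop) : Prop := forall n, N n -> n = gone G.

Definition simple_sub (K : G -> Prop) : Prop :=
  is_subgroup K /\ ~ trivial_sub K /\
  (forall N, normal_in N K -> trivial_sub N \/ subset K N).

End GroupDefs.

Definition is_action (G : Group) (X : Type) (act : G -> X -> X) : Prop :=
  (forall x, act (gone G) x = x) /\
  (forall g h x, act (gmul G g h) x = act g (act h x)).

Definition faithful (G : Group) (X : Type) (act : G -> X -> X) : Prop :=
  forall g, (forall x, act g x = x) -> g = gone G.

Definition img (G : Group) (X : Type) (act : G -> X -> X) (g : G) (U : X -> Prop) : X -> Prop :=
  fun x => exists y, U y /\ x = act g y.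

Definition orbit (G : Group) (X : Type) (act : G -> X -> X) (H : G -> Prop)
  (U : X -> Prop) : (X -> Prop) -> Prop :=
  fun V => exists h, H h /\ set_eq V (@img G X act h U).

Definition rigid (G : Group) (X : Type) (act : G -> X -> X) (U : X -> Prop) : G -> Prop :=
  fun g => forall x, ~ U x -> act g x = x.

Definition R_ (G : Group) (X : Type) (act : G -> X -> X) (U : X -> Prop) : G -> Prop :=
  @normal_closure G (@derived G (@rigid G X act U)).

Arguments is_action {G X} act.
Arguments faithful {G X} act.
Arguments img {G X} act g U _.
Arguments orbit {G X} act H U _.
Arguments rigid {G X} act U _.
Arguments R_ {G X} act U _.
Arguments simple_sub {G} K.
Arguments normal_in {G} N K.
Arguments trivial_sub {G} N.

(* The argument is the commutator trick for groups of homeomorphisms.  If n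
   lies in a subgroup N normalised by K and n displaces an open set W
   (nW ∩ W = ∅), then for a, b in K supported in W the double commutator
   [[a⁻¹, n], b] lies in N; since [a⁻¹, n] = a · (n⁻¹a⁻¹n) and the second
   factor is supported in n⁻¹W, disjoint from W, it equals [a, b]
   (comm_in_normal).  For a normal subgroup N of G this puts [G_(W), G_(W)]
   inside N, and conjugating around the orbit of U gives R_U ⊆ N
   (R_below_normal).  For a normal subgroup of R_U the elements of G_(W) are
   not available, so W is first shrunk twice, W ⊇ W1 ⊇ W2, using elements c, d
   of [G_(W), G_(W)] ⊆ R_U displacing W1 and W2; every [a, b] with a, b
   supported in W2 is then the commutator [[a⁻¹, c], [b⁻¹, d]] of elements of
   R_U supported in W (comm_of_shifted_comms).  Finally R_U is non-trivial by
   the Hausdorff property: a trivial R_U would make {U} a basis. *)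

From Stdlib Require Import List Classical.
Set Implicit Arguments.

Section GroupCancellation.
Variable G : Group.
Local Infix "·" := (gmul G) (at level 40, left associativity).
Local Notation "a ⁻¹" := (ginv G a) (at level 2, left associativity, format "a ⁻¹").

Lemma mulKg (a b : G) : a⁻¹ · (a · b) = b.
Proof. rewrite gmulA, gmulVl. apply gmul1l. Qed.

Lemma mulKVg (a b : G) : a · (a⁻¹ · b) = b.
Proof. rewrite gmulA, gmulVr. apply gmul1l. Qed.

Lemma inv_unique (a b : G) : a · b = gone G -> a⁻¹ = b.
Proof. intro E. rewrite <- (gmul1r G (a⁻¹)), <- E. apply mulKg. Qed.

Lemma ginvK (a : G) : a⁻¹⁻¹ = a.
Proof. apply inv_unique, gmulVl. Qed.

Lemma invMg (a b : G) : (a · b)⁻¹ = b⁻¹ · a⁻¹.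
Proof. apply inv_unique. rewrite <- gmulA, mulKVg. apply gmulVr. Qed.

Lemma inv_one : (gone G)⁻¹ = gone G.
Proof. apply inv_unique, gmul1l. Qed.

End GroupCancellation.

Arguments mulKg {G} a b.
Arguments mulKVg {G} a b.
Arguments inv_unique {G} a b _.
Arguments ginvK {G} a.
Arguments invMg {G} a b.

(* Decides identities of the free group: right-associate products, push
   inverses to the letters and cancel adjacent inverse pairs. *)
Ltac group_simpl :=
  repeat progress (rewrite ?invMg, ?ginvK, ?inv_one, <-?gmulA, ?gmulVl, ?gmulVr,
                     ?gmul1l, ?gmul1r, ?mulKg, ?mulKVg).

Section Conjugation.
Variable G : Group.
Local Infix "·" := (gmul G) (at level 40, left associativity).
Local Notation "a ⁻¹" := (ginv G a) (at level 2, left associativity, format "a ⁻¹").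

Lemma conj_one (g : G) : conj G g (gone G) = gone G.
Proof. unfold conj. group_simpl. reflexivity. Qed.

Lemma conj_mul (g a b : G) : conj G g (a · b) = conj G g a · conj G g b.
Proof. unfold conj. group_simpl. reflexivity. Qed.

Lemma conj_inv (g a : G) : conj G g a⁻¹ = (conj G g a)⁻¹.
Proof. unfold conj. group_simpl. reflexivity. Qed.

Lemma conj_comm (g a b : G) : conj G g (comm G a b) = comm G (conj G g a) (conj G g b).
Proof. unfold conj, comm. group_simpl. reflexivity. Qed.

Lemma conj_conj (g h a : G) : conj G g (conj G h a) = conj G (g · h) a.
Proof. unfold conj. group_simpl. reflexivity. Qed.

Lemma conj_Vconj (g a : G) : conj G g⁻¹ (conj G g a) = a.
Proof. unfold conj. group_simpl. reflexivity. Qed.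

(* [a, b] = a⁻¹ · (b⁻¹ a b): the second factor is a translate of a. *)
Lemma comm_as_conj (a b : G) : comm G a b = a⁻¹ · conj G b⁻¹ a.
Proof. unfold comm, conj. group_simpl. reflexivity. Qed.

Lemma nontrivial_elt (N : G -> Prop) : ~ trivial_sub N -> exists n, N n /\ n <> gone G.
Proof.
  intro HN. apply NNPP. intro Hno. apply HN. intros n Nn.
  apply NNPP. intro Hn. apply Hno. exists n. auto.
Qed.

Lemma gen_subgroup (S : G -> Prop) : is_subgroup G (gen G S).
Proof. split; [apply gen_one | split; [apply gen_mul | apply gen_inv]]. Qed.

Lemma gen_sub (S N : G -> Prop) :
  is_subgroup G N -> (forall g, S g -> N g) -> subset (gen G S) N.
Proof.
  intros [N1 [Nmul Ninv]] HS g Hg.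
  induction Hg; auto.
Qed.

Lemma derived_sub (H N : G -> Prop) :
  is_subgroup G N -> (forall a b, H a -> H b -> N (comm G a b)) ->
  subset (derived G H) N.
Proof.
  intros HN Hcomm. apply gen_sub; [exact HN |].
  intros g [a [b [Ha [Hb ->]]]]. auto.
Qed.

Lemma normal_closure_trivial (S : G -> Prop) :
  trivial_sub S -> trivial_sub (normal_closure G S).
Proof.
  intros HS g Hg. induction Hg as [g [h [s [Ss ->]]] | | a b _ IHa _ IHb | a _ IHa].
  - rewrite (HS s Ss). apply conj_one.
  - reflexivity.
  - rewrite IHa, IHb. apply gmul1l.
  - rewrite IHa. apply inv_one.
Qed.

Definition normalised_by (K N : G -> Prop) : Prop :=
  forall k n, K k -> N n -> N (conj G k n).

Variables (K N : G -> Prop).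
Hypotheses (HN : is_subgroup G N) (HNK : normalised_by K N)
  (HKinv : forall k, K k -> K k⁻¹).

Lemma comm_normal_r (k n : G) : K k -> N n -> N (comm G k n).
Proof.
  intros Kk Nn. destruct HN as [_ [Nmul Ninv]].
  replace (comm G k n) with (conj G k⁻¹ n⁻¹ · n) by (unfold comm, conj; group_simpl; reflexivity).
  apply Nmul; auto.
Qed.

Lemma comm_normal_l (n k : G) : N n -> K k -> N (comm G n k).
Proof.
  intros Nn Kk. destruct HN as [_ [Nmul Ninv]].
  replace (comm G n k) with (n⁻¹ · conj G k⁻¹ n) by (unfold comm, conj; group_simpl; reflexivity).
  apply Nmul; auto.
Qed.

End Conjugation.

Arguments conj_one {G} g.
Arguments conj_mul {G} g a b.
Arguments conj_inv {G} g a.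
Arguments conj_comm {G} g a b.
Arguments conj_conj {G} g h a.
Arguments conj_Vconj {G} g a.
Arguments comm_as_conj {G} a b.

Arguments normalised_by {G} K N.

Section Supports.
Variables (G : Group) (X : Type) (act : G -> X -> X).
Hypothesis Hact : is_action act.
Local Infix "·" := (gmul G) (at level 40, left associativity).
Local Notation "a ⁻¹" := (ginv G a) (at level 2, left associativity, format "a ⁻¹").

Lemma act_one x : act (gone G) x = x.
Proof. apply (proj1 Hact). Qed.

Lemma act_mul g h x : act (g · h) x = act g (act h x).
Proof. apply (proj2 Hact). Qed.

Lemma act_inv_l g x : act g⁻¹ (act g x) = x.
Proof. rewrite <- act_mul, gmulVl. apply act_one. Qed.

Lemma act_inv_r g x : act g (act g⁻¹ x) = x.
Proof. rewrite <- act_mul, gmulVr. apply act_one. Qed.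

Lemma img_char g (A : X -> Prop) x : img act g A x <-> A (act g⁻¹ x).
Proof.
  split.
  - intros [y [Ay ->]]. rewrite act_inv_l. exact Ay.
  - intro Ax. exists (act g⁻¹ x). rewrite act_inv_r. auto.
Qed.

Definition disjoint (A B : X -> Prop) : Prop := forall x, A x -> B x -> False.

Definition displaces (g : G) (W : X -> Prop) : Prop := forall x, W x -> W (act g x) -> False.

Lemma displaces_disjoint g W : displaces g W -> disjoint W (img act g⁻¹ W).
Proof. intros D x Wx Hx. apply (D x Wx). rewrite img_char, ginvK in Hx. exact Hx. Qed.

Lemma rigid_one V : rigid act V (gone G).
Proof. intros x _. apply act_one. Qed.

Lemma rigid_mul V g h : rigid act V g -> rigid act V h -> rigid act V (g · h).
Proof. intros Hg Hh x nx. rewrite act_mul, Hh, Hg; auto. Qed.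

Lemma rigid_inv V g : rigid act V g -> rigid act V g⁻¹.
Proof. intros Hg x nx. rewrite <- (Hg x nx) at 1. apply act_inv_l. Qed.

Lemma rigid_sub (V W : X -> Prop) g : subset V W -> rigid act V g -> rigid act W g.
Proof. intros S Hg x nx. apply Hg. intro v. apply nx, S, v. Qed.

Lemma rigid_stable V g x : rigid act V g -> V x -> V (act g x).
Proof.
  intros Hg Vx. apply NNPP. intro nV.
  assert (E : act g x = x) by (rewrite <- (act_inv_l g (act g x)), (Hg _ nV), act_inv_l; reflexivity).
  rewrite E in nV. contradiction.
Qed.

Lemma rigid_derived V g : derived G (rigid act V) g -> rigid act V g.
Proof.
  induction 1 as [g [a [b [Ha [Hb ->]]]] | | | ].
  - unfold comm. repeat apply rigid_mul; auto using rigid_inv.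
  - apply rigid_one.
  - apply rigid_mul; auto.
  - apply rigid_inv; auto.
Qed.

Lemma moved_in_support V g x : rigid act V g -> act g x <> x -> V x.
Proof. intros Hg Hx. apply NNPP. intro nV. exact (Hx (Hg x nV)). Qed.

Lemma rigid_conj g (A B : X -> Prop) a :
  subset (img act g A) B -> rigid act A a -> rigid act B (conj G g a).
Proof.
  intros S Ha x nx. unfold conj. rewrite !act_mul, Ha; [apply act_inv_r |].
  intro Ax. apply nx, S, img_char, Ax.
Qed.

Lemma derived_conj g (A B : X -> Prop) s :
  subset (img act g A) B -> derived G (rigid act A) s -> derived G (rigid act B) (conj G g s).
Proof.
  intro S. induction 1 as [s [a [b [Ha [Hb ->]]]] | | | ].
  - rewrite conj_comm. apply gen_base.
    exists (conj G g a), (conj G g b).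
    split; [| split; [| reflexivity]]; apply (rigid_conj (A := A)); assumption.
  - rewrite conj_one. apply gen_one.
  - rewrite conj_mul. apply gen_mul; auto.
  - rewrite conj_inv. apply gen_inv; auto.
Qed.

Lemma disjoint_commute_at (A B : X -> Prop) a b :
  rigid act A a -> rigid act B b -> disjoint A B -> forall x, act a (act b x) = act b (act a x).
Proof.
  intros Ha Hb D x.
  destruct (classic (A x)) as [Ax | nAx].
  - assert (nBx : ~ B x) by exact (D x Ax).
    assert (nBax : ~ B (act a x)) by exact (D _ (rigid_stable x Ha Ax)).
    rewrite (Hb x nBx), (Hb _ nBax). reflexivity.
  - destruct (classic (B x)) as [Bx | nBx].
    + assert (nAbx : ~ A (act b x)) by (intro HA; exact (D _ HA (rigid_stable x Hb Bx))).
      rewrite (Ha x nAx), (Ha _ nAbx). reflexivity.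
    + rewrite (Ha x nAx), (Hb x nBx), (Ha x nAx). reflexivity.
Qed.

Lemma nested_translates_disjoint (W1 W2 : X -> Prop) c d :
  subset W2 W1 -> displaces c W1 -> rigid act W1 d ->
  disjoint (img act c⁻¹ W2) (img act d⁻¹ W2).
Proof.
  intros S Dc Hd x Hc Hdx. rewrite img_char, ginvK in Hc, Hdx.
  assert (W1x : W1 x).
  { apply NNPP. intro nx. rewrite (Hd x nx) in Hdx. apply nx, S, Hdx. }
  exact (Dc x W1x (S _ Hc)).
Qed.

Hypothesis Hf : faithful act.

Lemma eq_of_act g h : (forall x, act g x = act h x) -> g = h.
Proof.
  intro E. assert (E1 : g · h⁻¹ = gone G).
  { apply Hf. intro x. rewrite act_mul, E. apply act_inv_r. }
  rewrite <- (gmul1r G g), <- (gmulVl G h), gmulA, E1. apply gmul1l.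
Qed.

Lemma comm_disjoint_factors (A B C : X -> Prop) p1 p2 q1 q2 :
  rigid act A p1 -> rigid act B p2 -> rigid act A q1 -> rigid act C q2 ->
  disjoint A B -> disjoint A C -> disjoint B C ->
  comm G (p1 · p2) (q1 · q2) = comm G p1 q1.
Proof.
  intros Hp1 Hp2 Hq1 Hq2 DAB DAC DBC.
  assert (DBA : disjoint B A) by (intros x Bx Ax; eauto).
  apply eq_of_act. intro y. unfold comm.
  rewrite !invMg, !act_mul.
  (* pointwise, commute p2, q2 past the A-supported factors until they meet
     their inverses *)
  rewrite (disjoint_commute_at Hp2 Hq1 DBA (act q2 y)),
          (disjoint_commute_at Hp2 Hq2 DBC y),
          (disjoint_commute_at Hq1 Hq2 DAC (act p2 y)),
          (disjoint_commute_at Hp1 Hq2 DAC (act q1 (act p2 y))),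
          (disjoint_commute_at (rigid_inv Hq1) Hq2 DAC), act_inv_l,
          (disjoint_commute_at Hq1 Hp2 DAB y),
          (disjoint_commute_at Hp1 Hp2 DAB),
          (disjoint_commute_at (rigid_inv Hq1) Hp2 DAB),
          (disjoint_commute_at (rigid_inv Hp1) Hp2 DAB), act_inv_l.
  reflexivity.
Qed.

(* The basic commutator trick: if n ∈ N displaces W and N is normalised by
   K, then [a, b] ∈ N for all a, b ∈ K supported in W, because
   [[a⁻¹, n], b] ∈ N and the factor n⁻¹a⁻¹n of [a⁻¹, n] lives off W. *)
Lemma comm_in_normal (K N : G -> Prop) (W : X -> Prop) n a b :
  is_subgroup G N -> normalised_by K N -> (forall k, K k -> K k⁻¹) ->
  N n -> displaces n W -> K a -> K b -> rigid act W a -> rigid act W b ->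
  N (comm G a b).
Proof.
  intros HN HNK HKinv Nn Dn Ka Kb Ha Hb.
  assert (Hcomm : N (comm G (comm G a⁻¹ n) b)).
  { apply (comm_normal_l HN HNK HKinv); auto. apply (comm_normal_r HN HNK HKinv); auto. }
  assert (E : comm G (comm G a⁻¹ n) b = comm G a b).
  { rewrite (comm_as_conj a⁻¹ n), ginvK, <- (gmul1r G b) at 1.
    apply (comm_disjoint_factors (A := W) (B := img act n⁻¹ W) (C := fun _ => False)).
    all: auto using rigid_one, rigid_inv, displaces_disjoint.
    - apply (rigid_conj (A := W)); [intros x Hx; exact Hx | apply rigid_inv; exact Ha].
    - intros x _ [].
    - intros x _ []. }
  rewrite <- E. exact Hcomm.
Qed.

(* The shrinking trick: if a, b live on V and s⁻¹V, t⁻¹V, V are pairwise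
   disjoint, then [a, b] is a commutator of the commutators [a⁻¹, s] and
   [b⁻¹, t], which live on V ∪ s⁻¹V and V ∪ t⁻¹V. *)
Lemma comm_of_shifted_comms (V : X -> Prop) a b s t :
  rigid act V a -> rigid act V b -> displaces s V -> displaces t V ->
  disjoint (img act s⁻¹ V) (img act t⁻¹ V) ->
  comm G (comm G a⁻¹ s) (comm G b⁻¹ t) = comm G a b.
Proof.
  intros Ha Hb Ds Dt Dst.
  rewrite (comm_as_conj a⁻¹ s), (comm_as_conj b⁻¹ t), !ginvK.
  apply (comm_disjoint_factors (A := V) (B := img act s⁻¹ V) (C := img act t⁻¹ V));
    auto using displaces_disjoint.
  - apply (rigid_conj (A := V)); [intros x Hx; exact Hx | apply rigid_inv; exact Ha].
  - apply (rigid_conj (A := V)); [intros x Hx; exact Hx | apply rigid_inv; exact Hb].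
Qed.

Lemma exists_moved_point n : n <> gone G -> exists x, act n x <> x.
Proof.
  intro Hn. apply NNPP. intro Hfix. apply Hn, Hf. intro x.
  apply NNPP. intro Hx. apply Hfix. eauto.
Qed.

End Supports.

Arguments disjoint {X} A B.
Arguments displaces {G X} act g W.

Lemma displaced_basic_nbhd (X : Type) (T : Topology X) (G : Group) (act : G -> X -> X)
  (Hhaus : hausdorff T) (B : (X -> Prop) -> Prop) (HB : is_basis T B)
  (c : G) (Hc : continuous T (act c)) (O : X -> Prop) y :
  is_open T O -> O y -> act c y <> y ->
  exists W, B W /\ W y /\ subset W O /\ displaces act c W.
Proof.
  intros HO Oy Hy.
  destruct (Hhaus y (act c y)) as [P [Q [HP [HQ [Py [Qcy DPQ]]]]]].
  { intro E. apply Hy. symmetry. exact E. }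
  assert (HO' : is_open T (fun x => O x /\ (P x /\ Q (act c x)))).
  { apply open_inter; [exact HO |]. apply open_inter; [exact HP | exact (Hc _ HQ)]. }
  destruct (proj2 HB _ HO' y (Logic.conj Oy (Logic.conj Py Qcy))) as [W [BW [Wy SW]]].
  exists W. split; [exact BW | split; [exact Wy | split]].
  - intros x Wx. apply (SW x Wx).
  - intros x Wx Wcx. apply (DPQ (act c x)); [apply (SW _ Wcx) | apply (SW _ Wx)].
Qed.

Arguments displaced_basic_nbhd {X T G} act Hhaus {B} HB c Hc {O y} _ _ _.

Section RigidNormalClosure.
Variables (X : Type) (T : Topology X) (G : Group) (act : G -> X -> X) (U : X -> Prop).
Local Notation translate := (orbit act (fun _ => True) U).
Hypotheses (Hact : is_action act) (Hf : faithful act)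
  (Hhomeo : forall g : G, homeomorphism T (act g)) (Hhaus : hausdorff T)
  (Hbasis : is_basis T translate).
Local Notation "a ⁻¹" := (ginv G a) (at level 2, left associativity, format "a ⁻¹").

Lemma translate_img g : translate (img act g U).
Proof. exists g. split; [exact I | intro x; reflexivity]. Qed.

Lemma derived_in_R (W : X -> Prop) s :
  translate W -> derived G (rigid act W) s -> R_ act U s.
Proof.
  intros [g [_ Eg]] Hs.
  rewrite <- (conj_Vconj g⁻¹ s), ginvK.
  apply gen_base. exists g, (conj G g⁻¹ s). split; [| reflexivity].
  apply (derived_conj Hact (A := W)); [| exact Hs].
  intros x Hx. rewrite img_char, ginvK in Hx by exact Hact.
  apply Eg, (img_char Hact) in Hx. rewrite (act_inv_l Hact) in Hx. exact Hx.
Qed.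

(* If R_U is trivial, all translates of U coincide with U; so a basis of
   translates cannot separate two points. *)
Lemma R_nontrivial (Hinf : infinite_type X)
  (Horb : forall V, orbit act (R_ act U) U V <-> translate V) : ~ trivial_sub (R_ act U).
Proof.
  intro Htriv.
  destruct (Hinf nil) as [x0 _]. destruct (Hinf (x0 :: nil)) as [y0 Hy0].
  assert (Hne : x0 <> y0) by (intro E; apply Hy0; left; exact E).
  destruct (Hhaus Hne) as [P [Q [HP [HQ [Px [Qy DPQ]]]]]].
  assert (Hall : forall V, translate V -> forall x, V x -> U x).
  { intros V HV x Vx. apply Horb in HV. destruct HV as [r [Rr Er]].
    rewrite (Htriv r Rr) in Er. apply Er, (img_char Hact) in Vx.
    rewrite inv_one, (act_one Hact) in Vx. exact Vx. }
  assert (Hsome : forall V, translate V -> forall x, U x -> V x).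
  { intros V HV x Ux. apply Horb in HV. destruct HV as [r [Rr Er]].
    rewrite (Htriv r Rr) in Er. apply Er, (img_char Hact).
    rewrite inv_one, (act_one Hact). exact Ux. }
  destruct (proj2 Hbasis _ HP x0 Px) as [V1 [HV1 [V1x S1]]].
  destruct (proj2 Hbasis _ HQ y0 Qy) as [V2 [HV2 [V2y S2]]].
  apply (DPQ y0).
  - apply S1, (Hsome V1 HV1), (Hall V2 HV2), V2y.
  - apply S2, V2y.
Qed.

Lemma derived_rigid_nontrivial (W : X -> Prop) :
  ~ trivial_sub (R_ act U) -> translate W ->
  exists c, derived G (rigid act W) c /\ c <> gone G.
Proof.
  intros Hnt [g [_ Eg]].
  assert (Hs : ~ trivial_sub (derived G (rigid act U)))
    by (intro Htriv; exact (Hnt (normal_closure_trivial Htriv))).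
  destruct (nontrivial_elt Hs) as [s [Ds Hs1]].
  exists (conj G g s). split.
  - apply (derived_conj Hact (A := U)); [| exact Ds]. intros x Hx. apply Eg, Hx.
  - intro E. apply Hs1. rewrite <- (conj_Vconj g s), E. apply conj_one.
Qed.

Lemma shrink_translate (W : X -> Prop) :
  ~ trivial_sub (R_ act U) -> translate W ->
  exists c W', derived G (rigid act W) c /\ translate W' /\ subset W' W /\ displaces act c W'.
Proof.
  intros Hnt HW.
  destruct (derived_rigid_nontrivial Hnt HW) as [c [Dc Hc1]].
  destruct (exists_moved_point Hf Hc1) as [y Hy].
  pose proof (moved_in_support (rigid_derived Hact Dc) Hy) as Wy.
  destruct (displaced_basic_nbhd act Hhaus Hbasis c (proj1 (Hhomeo c)) (proj1 Hbasis W HW) Wy Hy)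
    as [W' [HW' [_ [SW' DW']]]].
  exists c, W'. auto.
Qed.

Lemma R_below_normal (K N : G -> Prop) (V : X -> Prop) :
  is_subgroup G N -> normalised_by K N -> (forall k, K k -> K k⁻¹) ->
  (forall W, translate W -> orbit act K U W) ->
  translate V -> subset (derived G (rigid act V)) N ->
  subset (R_ act U) N.
Proof.
  intros HN HNK HKinv Horb HV Hsub.
  destruct (Horb V HV) as [r [Kr Er]].
  (* first [G_(U), G_(U)] ⊆ N, by conjugating into [G_(V), G_(V)] *)
  assert (HU : forall s, derived G (rigid act U) s -> N s).
  { intros s Hs. rewrite <- (conj_Vconj r s). apply HNK; [auto |].
    apply Hsub, (derived_conj Hact (A := U)); [| exact Hs]. intros x Hx. apply Er, Hx. }
  apply gen_sub; [exact HN |].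
  intros g [h [s [Hs ->]]].
  (* hU = r'U with r' ∈ K, so r'⁻¹h stabilises U *)
  destruct (Horb _ (translate_img h)) as [r' [Kr' Er']].
  rewrite <- (mulKVg r' h), <- conj_conj. apply HNK; [exact Kr' |].
  apply HU, (derived_conj Hact (A := U)); [| exact Hs].
  intros x Hx. rewrite (img_char Hact), invMg, ginvK, (act_mul Hact) in Hx.
  apply (img_char Hact) in Hx. apply Er', (img_char Hact) in Hx.
  rewrite (act_inv_l Hact) in Hx. exact Hx.
Qed.

Lemma comm_small_in_normal (N : G -> Prop) (W W1 W2 : X -> Prop) n c d a b :
  is_subgroup G N -> normalised_by (R_ act U) N -> N n -> displaces act n W ->
  translate W -> derived G (rigid act W) c -> subset W1 W -> displaces act c W1 ->
  derived G (rigid act W1) d -> subset W2 W1 -> displaces act d W2 ->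
  rigid act W2 a -> rigid act W2 b -> N (comm G a b).
Proof.
  intros HN HNR Nn Dn HW Dc SW1 DcW1 Dd SW2 DdW2 Ha Hb.
  assert (Rd : rigid act W1 d) by exact (rigid_derived Hact Dd).
  rewrite <- (comm_of_shifted_comms Hact Hf Ha Hb (s := c) (t := d)).
  2: intros x Wx Wcx; exact (DcW1 x (SW2 _ Wx) (SW2 _ Wcx)).
  2: exact DdW2.
  2: exact (nested_translates_disjoint Hact SW2 DcW1 Rd).
  (* both commutators lie in [G_(W), G_(W)] ⊆ R_U *)
  assert (Hin : forall e f, rigid act W2 e -> rigid act W f ->
                            derived G (rigid act W) (comm G e⁻¹ f)).
  { intros e f He Hfw. apply gen_base. exists e⁻¹, f. repeat split; auto.
    apply (rigid_sub (V := W2)); [intros x Hx; apply SW1, SW2, Hx | exact (rigid_inv Hact He)]. }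
  assert (Dca : derived G (rigid act W) (comm G a⁻¹ c)) by exact (Hin a c Ha (rigid_derived Hact Dc)).
  assert (Ddb : derived G (rigid act W) (comm G b⁻¹ d))
    by exact (Hin b d Hb (rigid_sub SW1 Rd)).
  apply (comm_in_normal Hact Hf (K := R_ act U) (W := W) (n := n)); auto.
  - intros k Rk. apply gen_inv, Rk.
  - exact (derived_in_R HW Dca).
  - exact (derived_in_R HW Ddb).
  - exact (rigid_derived Hact Dca).
  - exact (rigid_derived Hact Ddb).
Qed.

Lemma nontrivial_displaces_translate (N : G -> Prop) :
  ~ trivial_sub N -> exists n W, N n /\ translate W /\ displaces act n W.
Proof.
  intro HN. destruct (nontrivial_elt HN) as [n [Nn Hn1]].
  destruct (exists_moved_point Hf Hn1) as [x Hx].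
  destruct (displaced_basic_nbhd act Hhaus Hbasis n (proj1 (Hhomeo n)) (open_full T) I Hx)
    as [W [HW [_ [_ DW]]]].
  exists n, W. auto.
Qed.

Lemma R_below_normal_subgroup (N : G -> Prop) :
  normal_in N (fun _ => True) -> ~ trivial_sub N -> subset (R_ act U) N.
Proof.
  intros [HN [_ HNG]] HNnt.
  destruct (nontrivial_displaces_translate HNnt) as [n [W [Nn [HW Dn]]]].
  apply (R_below_normal HN HNG (V := W)); auto.
  apply derived_sub; [exact HN |]. intros a b Ha Hb.
  apply (comm_in_normal Hact Hf (K := fun _ => True) (W := W) (n := n)); auto.
Qed.

Lemma R_below_own_normal_subgroup
  (Horb : forall V, translate V -> orbit act (R_ act U) U V) (Hnt : ~ trivial_sub (R_ act U))
  (N : G -> Prop) : normal_in N (R_ act U) -> ~ trivial_sub N -> subset (R_ act U) N.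
Proof.
  intros [HN [_ HNR]] HNnt.
  destruct (nontrivial_displaces_translate HNnt) as [n [W [Nn [HW Dn]]]].
  destruct (shrink_translate Hnt HW) as [c [W1 [Dc [HW1 [SW1 DcW1]]]]].
  destruct (shrink_translate Hnt HW1) as [d [W2 [Dd [HW2 [SW2 DdW2]]]]].
  apply (R_below_normal HN HNR (V := W2)); auto.
  - intros k Rk. apply gen_inv, Rk.
  - apply derived_sub; [exact HN |]. intros a b Ha Hb.
    exact (comm_small_in_normal HN HNR Nn Dn HW Dc SW1 DcW1 Dd SW2 DdW2 Ha Hb).
Qed.

End RigidNormalClosure.

Theorem proposition4p3 (X : Type) (T : Topology X) (G : Group) (act : G -> X -> X)
  (Hact : is_action act) (Hfaith : faithful act)
  (Hhomeo : forall g : G, homeomorphism T (act g))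
  (Hinf : infinite_type X) (Hhaus : hausdorff T)
  (U : X -> Prop) (HUopen : is_open T U)
  (Horb : forall V, orbit act (R_ act U) U V <-> orbit act (fun _ => True) U V)
  (Hbasis : is_basis T (orbit act (fun _ => True) U)) :
  simple_sub (R_ act U) /\
  (forall N : G -> Prop, normal_in N (fun _ => True) -> ~ trivial_sub N ->
     subset (R_ act U) N).
Proof.
  assert (Hnt := R_nontrivial Hact Hhaus Hbasis Hinf Horb).
  split.
  - split; [apply gen_subgroup | split; [exact Hnt |]].
    intros N HN. destruct (classic (trivial_sub N)) as [Htriv | HNnt]; [left; exact Htriv | right].
    apply (R_below_own_normal_subgroup Hact Hfaith Hhomeo Hhaus Hbasis); auto.
    intros V HV. apply Horb, HV.
  - intros N HN HNnt. exact (R_below_normal_subgroup Hact Hfaith Hhomeo Hhaus Hbasis HN HNnt).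
Qed.
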